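(* Let $R$ be a finite local Frobenius ring with maximal ideal $M$, not a field and of odd characteristic, with a fixed primitive additive character $\psi$, and let $\tau$ be a non-primitive multiplicative character of $R$. Then for every $a\in R^\times$, $$\frac{1}{|M^\perp|}\sum_{b\in 1+M^\perp}|K_\tau(ab)|^2=|R|\,(1+\sigma(a)).$$
   Context: All rings are finite and commutative with identity; $R^\times$ is the unit group. $M^\perp=\{r\in R: rm=0\ \forall m\in M\}$. An additive character $(R,+)\to\mathbb{C}^*$ is primitive if the only ideal on which it is identically $1$ is $(0)$; $R$ is Frobenius if such a character exists. A multiplicative character is a homomorphism $R^\times\to\mathbb{C}^*$; its conductor is $R$ if it is trivial, and otherwise the largest ideal $I\subseteq M$ such that it is identically $1$ on $1+I$; it is primitive if its conductor is $(0)$. $K_\tau(a)=\sum_{u\in R^\times}\tau(u)\psi(u+au^{-1})$. Odd characteristic means $R/M$ has odd characteristic; the quadratic character $\sigma:R^\times\to\{\pm1\}$ is $\sigma(u)=$ the quadratic (Legendre) character of the residue class of $u$ in the finite field $R/M$. *)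

From HB Require Import structures.
From mathcomp Require Import all_boot all_order all_algebra all_field.
Set Implicit Arguments. Unset Strict Implicit. Unset Printing Implicit Defensive.
Import Order.TTheory GRing.Theory Num.Theory.
Local Open Scope ring_scope.

Section Defs.
Variable R : finComUnitRingType.

Definition is_ideal (I : {set R}) : Prop :=
  [/\ 0 \in I, (forall x y, x \in I -> y \in I -> x + y \in I)
    & (forall r x, x \in I -> r * x \in I)].

Definition is_maximal_ideal (M : {set R}) : Prop :=
  [/\ is_ideal M, (1 : R) \notin M &
      forall J : {set R}, is_ideal J -> M \subset J -> J = M \/ J = [set: R]].

Definition local_with_max (M : {set R}) : Prop :=
  is_maximal_ideal M /\ forall J, is_maximal_ideal J -> J = M.

Definition is_field_ring : Prop := forall x : R, x != 0 -> x \is a GRing.unit.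

Definition annih (M : {set R}) : {set R} :=
  [set r | [forall m in M, r * m == 0]].

(* R/M has odd characteristic: its characteristic is an odd prime p,
   i.e. p*1 = 0 in R/M, i.e. p%:R \in M *)
Definition odd_residue_char (M : {set R}) : Prop :=
  exists p : nat, [/\ prime p, odd p & (p%:R : R) \in M].

Definition additive_character (psi : R -> algC) : Prop :=
  (forall x, psi x != 0) /\ (forall x y, psi (x + y) = psi x * psi y).

Definition primitive_additive (psi : R -> algC) : Prop :=
  forall I, is_ideal I -> (forall x, x \in I -> psi x = 1) -> I = [set 0].

(* multiplicative character R^x -> C^*, given as a function on R whose
   values outside R^x are irrelevant *)
Definition mult_character (tau : R -> algC) : Prop :=
  (forall u, u \is a GRing.unit -> tau u != 0) /\
  (forall u v, u \is a GRing.unit -> v \is a GRing.unit ->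
     tau (u * v) = tau u * tau v).

(* conductor is (0): tau nontrivial and every ideal I contained in M on which
   tau is 1 on 1+I is (0) (i.e. the largest such ideal is (0)) *)
Definition primitive_mult (M : {set R}) (tau : R -> algC) : Prop :=
  (exists u, u \is a GRing.unit /\ tau u != 1) /\
  forall I, is_ideal I -> I \subset M ->
    (forall x, x \in I -> tau (1 + x) = 1) -> I = [set 0].

Definition kloost (psi tau : R -> algC) (a : R) : algC :=
  \sum_(u : R | u \is a GRing.unit) tau u * psi (u + a * u^-1).

Definition sigma (M : {set R}) (u : R) : algC :=
  if [exists x : R, u - x ^+ 2 \in M] then 1 else -1.

End Defs.

From HB Require Import structures.
From mathcomp Require Import all_boot all_order all_algebra all_field.
From mathcomp Require Import ring.
Import Order.TTheory GRing.Theory Num.Theory.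
Local Open Scope ring_scope.
Set Implicit Arguments. Unset Strict Implicit. Unset Printing Implicit Defensive.

(* Since R is local, M is the set of nonunits, and since psi is primitive an ideal
   and its annihilator have complementary sizes; hence N := annih M is the least
   nonzero ideal, and as tau is not primitive its conductor contains N, i.e.
   tau = 1 on 1 + N.  Substituting u (1 + n), n in N, in K_tau(a (1 + m))
   multiplies each term by psi ((u - a/u) n), and averaging over n keeps only the
   units with u^2 = a mod M.  So K vanishes when a is not a square mod M, and when
   a = c^2 mod M it equals psi (a m / c) G(c) + psi (- a m / c) G(-c), where G(d)
   is the part of the sum over u = d mod M.  Averaging |K|^2 over m in N kills the
   cross terms because 2a/c is a unit (odd characteristic), and |G(d)|^2 = |R|:
   expanding G(d) conj(G(d)) along u = v (1 + t), the sum over v vanishes unless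
   t is in N, since otherwise its phase moves linearly, with nonzero slope, along
   the cosets of {x | t x in N}. *)

Lemma conj_unity_root (z : algC) n : (0 < n)%N -> z ^+ n = 1 -> z^* = z^-1.
Proof.
move=> n_gt0 zn1; have : `|z| ^+ n == 1 by rewrite -normrX zn1 normr1.
rewrite pexpr_eq1 // => /eqP z1.
by rewrite invC_norm z1 expr1n invr1 mul1r.
Qed.

Lemma subr_invr (R : comUnitRingType) (x y : R) :
  x \is a GRing.unit -> y \is a GRing.unit -> x^-1 - y^-1 = x^-1 * y^-1 * (y - x).
Proof.
move=> xU yU; rewrite mulrBr -mulrA mulVr // mulr1 [x^-1 * y^-1]mulrC -mulrA.
by rewrite mulVr // mulr1.
Qed.

Lemma sum_shift (R : finZmodType) (V : nmodType) (F : R -> V) (P : pred R) (s : R) :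
  (forall y, P (y + s) = P y) -> \sum_(y | P y) F y = \sum_(y | P y) F (y + s).
Proof. by move=> Ps; rewrite (reindex_inj (addIr s)); apply: eq_bigl. Qed.

Lemma sum_coset (R : finZmodType) (V : nmodType) (I : {set R}) (F : R -> V) d :
  \sum_(v | v - d \in I) F v = \sum_(t in I) F (t + d).
Proof. by rewrite (reindex_inj (addIr d)); apply: eq_bigl => t; rewrite addrK. Qed.

Section Ideals.
Variable R : finComUnitRingType.
Implicit Types (I J : {set R}) (r x y : R).

Lemma ideal0 I : is_ideal I -> 0 \in I. Proof. by case. Qed.

Lemma idealD I x y : is_ideal I -> x \in I -> y \in I -> x + y \in I.
Proof. by case=> _ + _; apply. Qed.

Lemma idealMl I r x : is_ideal I -> x \in I -> r * x \in I.
Proof. by case=> _ _; apply. Qed.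

Lemma idealMr I r x : is_ideal I -> x \in I -> x * r \in I.
Proof. by rewrite mulrC; apply: idealMl. Qed.

Lemma idealN I x : is_ideal I -> x \in I -> - x \in I.
Proof. by rewrite -mulN1r; apply: idealMl. Qed.

Lemma idealB I x y : is_ideal I -> x \in I -> y \in I -> x - y \in I.
Proof. by move=> hI xI yI; rewrite idealD ?idealN. Qed.

Lemma idealDr I x s :
  is_ideal I -> s \in I -> (x + s \in I) = (x \in I).
Proof.
by move=> hI sI; apply/idP/idP => xsI; [rewrite -(addrK s x) idealB | rewrite idealD].
Qed.

Lemma idealBC I x y : is_ideal I -> x - y \in I -> y - x \in I.
Proof. by move=> hI /(idealN hI); rewrite opprB. Qed.

Lemma card_ideal_gt0 I : is_ideal I -> (0 < #|I|)%N.
Proof. by move=> hI; apply/card_gt0P; exists 0; exact: ideal0. Qed.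

Lemma idealT : is_ideal [set: R].
Proof. by split=> *; rewrite in_setT. Qed.

Lemma ideal_unitT I u : is_ideal I -> u \in I -> u \is a GRing.unit -> I = [set: R].
Proof.
move=> hI uI uU; apply/setP=> x; rewrite in_setT -[x]mulr1 -(mulVr uU) mulrA.
exact: idealMl.
Qed.

Definition idealb I := [&& 0 \in I,
  [forall x, forall y, (x \in I) ==> (y \in I) ==> (x + y \in I)] &
  [forall r, forall x, (x \in I) ==> (r * x \in I)]].

Lemma idealP I : reflect (is_ideal I) (idealb I).
Proof.
apply: (iffP and3P) => [[I0 /forallP ID /forallP IM] | [I0 ID IM]]; split=> //.
- by move=> x y xI yI; move/forallP/(_ y): (ID x); rewrite xI yI.
- by move=> r x xI; move/forallP/(_ x): (IM r); rewrite xI.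
- by apply/forallP=> x; apply/forallP=> y; do 2!apply/implyP=> ?; apply: ID.
- by apply/forallP=> r; apply/forallP=> x; apply/implyP; apply: IM.
Qed.

Lemma mulset_ideal I t : is_ideal I -> is_ideal [set t * y | y in I].
Proof.
move=> hI; split.
- by apply/imsetP; exists 0; rewrite ?mulr0 ?ideal0.
- move=> _ _ /imsetP[x xI ->] /imsetP[y yI ->].
  by apply/imsetP; exists (x + y); rewrite ?mulrDr ?idealD.
- move=> r _ /imsetP[x xI ->].
  by apply/imsetP; exists (r * x); [exact: idealMl | rewrite mulrCA].
Qed.

Lemma mulr_preim_ideal I t :
  is_ideal I -> is_ideal [set x | t * x \in I].
Proof.
move=> hI; split=> [|x y|r x]; rewrite !inE ?mulr0 ?ideal0 //.
  by rewrite mulrDr; apply: idealD.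
by rewrite mulrCA; apply: idealMl.
Qed.

Lemma annihP I r m : r \in annih I -> m \in I -> r * m = 0.
Proof. by rewrite inE => /forall_inP rI mI; apply/eqP/rI. Qed.

Lemma annih_ideal I : is_ideal (annih I).
Proof.
split=> [|x y xA yA|r x xA]; rewrite inE; apply/forall_inP=> m mI.
- by rewrite mul0r.
- by rewrite mulrDl (annihP xA) ?(annihP yA) ?addr0.
- by rewrite -mulrA (annihP xA) ?mulr0.
Qed.

Lemma annih_mul_eq I r x y :
  r \in annih I -> x - y \in I -> r * x = r * y.
Proof. by move=> rA xyI; apply/eqP; rewrite -subr_eq0 -mulrBr (annihP rA xyI). Qed.

Lemma annihS I J : I \subset J -> annih J \subset annih I.
Proof.
move=> sIJ; apply/subsetP=> r rJ; rewrite inE; apply/forall_inP=> m mI.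
by rewrite (annihP rJ) ?(subsetP sIJ).
Qed.

Lemma sub_annih_annih I : I \subset annih (annih I).
Proof.
apply/subsetP=> y yI; rewrite inE; apply/forall_inP=> m mA.
by rewrite mulrC (annihP mA yI).
Qed.

Lemma annih0 : annih [set 0] = [set: R].
Proof.
by apply/setP=> r; rewrite in_setT inE; apply/forall_inP=> m; rewrite in_set1 => /eqP->; rewrite mulr0.
Qed.

Lemma annihT : annih [set: R] = [set 0].
Proof.
apply/setP=> r; rewrite in_set1; apply/idP/eqP=> [rT | ->].
  by rewrite -[r]mulr1 (annihP rT) ?in_setT.
by rewrite inE; apply/forall_inP=> m _; rewrite mul0r.
Qed.

End Ideals.

Section AdditiveCharacter.
Variable R : finComUnitRingType.
Variable psi : R -> algC.
Hypothesis hpsi : additive_character psi.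
Implicit Types (I : {set R}) (x y : R).

Lemma psi_neq0 x : psi x != 0. Proof. exact: hpsi.1. Qed.

Lemma psiD x y : psi (x + y) = psi x * psi y. Proof. exact: hpsi.2. Qed.

Lemma psi0 : psi 0 = 1.
Proof. by apply: (mulfI (psi_neq0 0)); rewrite -psiD !addr0 mulr1. Qed.

Lemma psiN x : psi (- x) = (psi x)^-1.
Proof. by apply: (mulfI (psi_neq0 x)); rewrite -psiD subrr psi0 mulfV ?psi_neq0. Qed.

Lemma psiMn x n : psi (x *+ n) = psi x ^+ n.
Proof. by elim: n => [|n IHn]; rewrite ?mulr0n ?psi0 // mulrS psiD IHn exprS. Qed.

Lemma psi_conj x : (psi x)^* = psi (- x).
Proof.
rewrite psiN; apply: (conj_unity_root (fingroup.order_gt0 x)).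
by rewrite -psiMn (fingroup.expg_order x : x *+ _ = 0) psi0.
Qed.

Hypothesis hpsiP : primitive_additive psi.

(* By primitivity, the character [y |-> psi (x * y)] of [I] is trivial only when
   [x] annihilates [I]. *)
Lemma sum_psi_ideal I x : is_ideal I ->
  \sum_(y in I) psi (x * y) = if x \in annih I then #|I|%:R else 0.
Proof.
move=> hI; case: ifPn => [xA | xNA].
  by rewrite (eq_bigr (fun=> 1)) ?sumr_const // => y yI; rewrite (annihP xA yI) psi0.
have [y0 y0I psi_y0] : exists2 y0, y0 \in I & psi (x * y0) != 1.
  apply/exists_inP; apply: contraR xNA => /exists_inPn psi1.
  have xI0 : [set x * y | y in I] = [set 0].
    by apply: hpsiP (mulset_ideal x hI) _ => _ /imsetP[y yI ->]; apply/eqP/negbNE/psi1.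
  by rewrite inE; apply/forall_inP=> y yI; rewrite -in_set1 -xI0 imset_f.
set S := \sum_(y in I) _; suff: (1 - psi (x * y0)) * S = 0.
  by move/eqP; rewrite mulf_eq0 subr_eq0 eq_sym (negbTE psi_y0) => /eqP.
have shiftI y : (y + y0 \in I) = (y \in I) by rewrite idealDr.
rewrite mulrBl mul1r /S mulr_sumr (sum_shift _ shiftI); apply/eqP; rewrite subr_eq0.
by apply/eqP/eq_bigr => y _; rewrite mulrDr psiD mulrC.
Qed.

Lemma card_ideal_annih I : is_ideal I -> (#|I| * #|annih I| = #|R|)%N.
Proof.
move=> hI; apply/eqP; rewrite -(eqr_nat algC) natrM; apply/eqP.
transitivity (\sum_x \sum_(y in I) psi (x * y)).
  by rewrite (eq_bigr _ (fun x _ => sum_psi_ideal x hI)) -big_mkcond sumr_const mulr_natr.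
rewrite exchange_big /= (eq_bigr (fun y => if y \in [set 0] then #|R|%:R else 0)).
  rewrite (bigD1 0 (ideal0 hI)) /= in_set1 eqxx big1 ?addr0 // => y /andP[_ y0].
  by rewrite in_set1 (negbTE y0).
move=> y _; rewrite -annihT -cardsT -(sum_psi_ideal y (idealT R)).
by apply: eq_big => [x | x _]; rewrite ?in_setT // mulrC.
Qed.

Lemma annihK I : is_ideal I -> annih (annih I) = I.
Proof.
move=> hI; apply/esym/eqP; rewrite eqEcard sub_annih_annih /=.
have A_gt0 := card_ideal_gt0 (annih_ideal I).
rewrite -(leq_pmul2l A_gt0) card_ideal_annih; last exact: annih_ideal.
by rewrite mulnC card_ideal_annih.
Qed.

Lemma sum_psi_linear_shift I (P : pred R) (f c : R -> R) : is_ideal I ->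
  (forall v s, s \in I -> P (v + s) = P v) ->
  (forall v s, P v -> s \in I -> f (v + s) = f v + c v * s) ->
  (forall v, P v -> c v \notin annih I) ->
  \sum_(v | P v) psi (f v) = 0.
Proof.
move=> hI PI fI cI.
have I_neq0 : #|I|%:R != 0 :> algC by rewrite pnatr_eq0 -lt0n card_ideal_gt0.
apply: (mulIf I_neq0); rewrite mul0r -sumr_const mulr_sumr.
rewrite (eq_bigr (fun s => \sum_(v | P v) psi (f (v + s)))) => [|s sI]; last first.
  by rewrite mulr1 (sum_shift _ (fun v => PI v s sI)).
rewrite exchange_big big1 // => v Pv; rewrite (eq_bigr (fun s => psi (f v) * psi (c v * s))).
  by rewrite -mulr_sumr sum_psi_ideal // (negbTE (cI v Pv)) mulr0.
by move=> s sI; rewrite fI // psiD.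
Qed.

End AdditiveCharacter.

Section LocalRing.
Variable R : finComUnitRingType.
Variable M : {set R}.
Hypothesis hloc : local_with_max M.
Implicit Types (I : {set R}) (a d t u v x y : R).

Lemma max_ideal : is_ideal M. Proof. by case: hloc => -[]. Qed.

Lemma one_notin_max : (1 : R) \notin M. Proof. by case: hloc => -[]. Qed.

Lemma unit_notin_max u : u \is a GRing.unit -> u \notin M.
Proof.
move=> uU; apply: contra one_notin_max => uM.
by rewrite (ideal_unitT max_ideal uM uU) in_setT.
Qed.

(* A nonunit [x] lies in a proper ideal; one of largest size is maximal, hence is [M]. *)
Lemma notin_max_unit x : x \notin M -> x \is a GRing.unit.
Proof.
apply: contraR => xNU.
pose S := [set I | [&& idealb I, x \in I & 1 \notin I]].
have xRS : [set x * r | r in [set: R]] \in S.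
  rewrite inE; apply/and3P; split; first by apply/idealP; exact: mulset_ideal (idealT R).
    by apply/imsetP; exists 1; rewrite ?mulr1 ?in_setT.
  apply: contra xNU => /imsetP[r _ xr1]; apply/unitrPr; exists r; exact/esym.
have [I IS Imax] := arg_maxnP (fun I : {set R} => #|I|) xRS.
have : I \in S := IS; rewrite inE => /and3P[/idealP hI xI oneNI].
suff <- : I = M by [].
apply: hloc.2; split=> // J hJ sIJ.
have [oneJ | oneNJ] := boolP (1 \in J); first by right; exact: ideal_unitT hJ oneJ (unitr1 R).
left; apply/eqP; rewrite eq_sym eqEcard sIJ /=; apply: Imax.
change (J \in S); rewrite inE oneNJ (subsetP sIJ _ xI) /= andbT; exact/idealP.
Qed.

Lemma max_idealE x : (x \in M) = (x \isn't a GRing.unit).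
Proof.
apply/idP/idP => [xM | xNU]; first by apply: contraL xM; exact: unit_notin_max.
by apply: contraR xNU; exact: notin_max_unit.
Qed.

Lemma proper_ideal_sub_max I : is_ideal I -> 1 \notin I -> I \subset M.
Proof.
move=> hI oneNI; apply/subsetP=> x xI; rewrite max_idealE; apply: contra oneNI => xU.
by rewrite (ideal_unitT hI xI xU) in_setT.
Qed.

Lemma mul_max x y : (x * y \in M) = (x \in M) || (y \in M).
Proof. by rewrite !max_idealE unitrM negb_and. Qed.

Lemma mul_max_unitl u x : u \is a GRing.unit -> (u * x \in M) = (x \in M).
Proof. by move=> uU; rewrite mul_max (negbTE (unit_notin_max uU)). Qed.

Lemma unitrD_max u x : u \is a GRing.unit -> x \in M -> u + x \is a GRing.unit.
Proof.
move=> uU xM; apply: notin_max_unit.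
by rewrite (idealDr u max_ideal xM) unit_notin_max.
Qed.

Lemma unit_one_add_max t : t \in M -> 1 + t \is a GRing.unit.
Proof. exact: unitrD_max (unitr1 R). Qed.

Lemma unit_cong d v : d \is a GRing.unit -> v - d \in M -> v \is a GRing.unit.
Proof. by move=> dU vdM; rewrite -(subrK d v) addrC unitrD_max. Qed.

Lemma invr_cong d v : d \is a GRing.unit -> v - d \in M -> v^-1 - d^-1 \in M.
Proof.
move=> dU vdM; rewrite subr_invr ?(unit_cong dU vdM) //.
by apply: idealMl max_ideal _; exact: idealBC max_ideal vdM.
Qed.

Lemma sum_class_mul (V : nmodType) (F : R -> V) d v :
  v \is a GRing.unit -> v - d \in M ->
  \sum_(u | u - d \in M) F u = \sum_(t in M) F (v * (1 + t)).
Proof.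
move=> vU vdM; rewrite (reindex (fun t => v * (1 + t))) /=; last first.
  apply: onW_bij; exists (fun u => v^-1 * u - 1) => x.
    by rewrite mulKr // addrAC subrr add0r.
  by rewrite addrC subrK mulVKr.
apply: eq_bigl => t; rewrite (_ : v * (1 + t) - d = v * t + (v - d)); last by ring.
by rewrite (idealDr _ max_ideal vdM) mul_max_unitl.
Qed.

Lemma sqr_cong a d v : a - d ^+ 2 \in M -> v - d \in M -> v * v - a \in M.
Proof.
move=> adM vdM; have -> : v * v - a = (v - d) * (v + d) + (d ^+ 2 - a) by ring.
by apply: (idealD max_ideal); [exact: idealMr _ max_ideal vdM | exact: idealBC max_ideal adM].
Qed.

Lemma sqr_cong_unit a d : a \is a GRing.unit -> a - d ^+ 2 \in M -> d \is a GRing.unit.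
Proof.
move=> aU adM; rewrite -(unitrX_pos _ (isT : 0 < 2)%N).
by apply: unit_cong aU _; exact: idealBC max_ideal adM.
Qed.

Lemma two_notin_max : odd_residue_char M -> (2 : R) \notin M.
Proof.
case=> p [_ p_odd pM]; apply: contra one_notin_max => twoM.
have p_half : p%:R = 2 * (p./2)%:R + 1 :> R.
  by rewrite -{1}(odd_double_half p) p_odd natrD -muln2 natrM mulrC addrC.
have := idealB max_ideal pM (idealMr (p./2)%:R max_ideal twoM).
by rewrite p_half addrC addKr.
Qed.

Lemma annih_max_sub_max : ~ is_field_ring R -> annih M \subset M.
Proof.
move=> notF; apply: proper_ideal_sub_max (annih_ideal M) _; apply/negP=> oneN.
apply: notF => x x0; apply: notin_max_unit; apply: contra x0 => xM.
by rewrite -[x]mul1r (annihP oneN xM).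
Qed.

End LocalRing.

Section Socle.
Variable R : finComUnitRingType.
Variable M : {set R}.
Variable psi : R -> algC.
Hypothesis hloc : local_with_max M.
Hypothesis hpsi : additive_character psi.
Hypothesis hpsiP : primitive_additive psi.
Local Notation N := (annih M).

Lemma annih_max_neq0 : N != [set 0].
Proof.
apply: contra (one_notin_max hloc) => /eqP N0.
by rewrite -(annihK hpsi hpsiP (max_ideal hloc)) N0 annih0 in_setT.
Qed.

(* A nonzero ideal [I] has a proper annihilator, so [annih I \subset M] and
   [N \subset annih (annih I) = I]. *)
Lemma annih_max_sub I : is_ideal I -> I != [set 0] -> N \subset I.
Proof.
move=> hI I0; rewrite -(annihK hpsi hpsiP hI).
apply/annihS/(proper_ideal_sub_max hloc (annih_ideal I)); apply: contra I0 => oneA.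
apply/eqP/setP=> y; rewrite in_set1; apply/idP/eqP=> [yI | ->]; last exact: ideal0.
by rewrite -[y]mul1r (annihP oneA yI).
Qed.

Lemma exists_mul_annih_max t : t != 0 -> exists2 x, t * x \in N & t * x != 0.
Proof.
move=> t0; have [n nN n0] : exists2 n, n \in N & n != 0.
  apply/exists_inP; apply: contraR annih_max_neq0 => /exists_inPn N0.
  apply/eqP/setP=> n; rewrite in_set1; apply/idP/eqP=> [/N0/negbNE/eqP // | ->].
  exact: ideal0 (annih_ideal M).
have tR0 : [set t * x | x in [set: R]] != [set 0].
  by apply: contra t0 => /eqP tR; rewrite -[t]mulr1 -in_set1 -tR imset_f ?in_setT.
have /imsetP[x _ nx] := subsetP (annih_max_sub (mulset_ideal t (idealT R)) tR0) n nN.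
by exists x; rewrite -nx.
Qed.

Lemma sum_psi_annih_max c :
  \sum_(m in N) psi (c * m) = if c \in M then #|N|%:R else 0.
Proof.
by rewrite (sum_psi_ideal hpsi hpsiP c (annih_ideal M)) (annihK hpsi hpsiP (max_ideal hloc)).
Qed.

Lemma sum_norm_twisted (G1 G2 : algC) e :
  odd_residue_char M -> e \is a GRing.unit ->
  \sum_(m in N) `|psi (e * m) * G1 + psi (- e * m) * G2| ^+ 2
  = #|N|%:R * (`|G1| ^+ 2 + `|G2| ^+ 2).
Proof.
move=> hodd eU.
have eeNM : e + e \notin M.
  by rewrite -mulr2n -mulr_natl (mul_max hloc) negb_or two_notin_max // unit_notin_max.
have eeNM' : - e + - e \notin M by rewrite -opprD (max_idealE hloc) unitrN -(max_idealE hloc).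
set C := `|G1| ^+ 2 + `|G2| ^+ 2.
rewrite (eq_bigr (fun m => psi ((e + e) * m) * (G1 * G2^*)
    + psi ((- e + - e) * m) * (G2 * G1^*) + C)) => [|m _]; last first.
  rewrite /C !normCK rmorphD !rmorphM /= !(psi_conj hpsi) !mulrDl !mulNr opprK !(psiD hpsi).
  have psiNe : psi (e * m) * psi (- (e * m)) = 1 by rewrite -(psiD hpsi) subrr (psi0 hpsi).
  set x := psi (e * m) in psiNe *; set y := psi (- (e * m)) in psiNe *.
  apply/eqP; rewrite -subr_eq0; apply/eqP.
  transitivity ((x * y - 1) * (G1 * G1^* + G2 * G2^*)); first by ring.
  by rewrite psiNe subrr mul0r.
rewrite big_split big_split /= sumr_const -!mulr_suml !sum_psi_annih_max.
by rewrite (negbTE eeNM) (negbTE eeNM') !mul0r !add0r mulr_natl.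
Qed.

End Socle.

Section MultCharacter.
Variable R : finComUnitRingType.
Variable tau : R -> algC.
Hypothesis htau : mult_character tau.
Implicit Types u v : R.

Lemma tau_neq0 u : u \is a GRing.unit -> tau u != 0. Proof. exact: htau.1. Qed.

Lemma tauM u v : u \is a GRing.unit -> v \is a GRing.unit -> tau (u * v) = tau u * tau v.
Proof. exact: htau.2. Qed.

Lemma tau1 : tau 1 = 1.
Proof.
have U1 := unitr1 R.
by apply: (mulfI (tau_neq0 U1)); rewrite -tauM // !mulr1.
Qed.

Lemma tauX u n : u \is a GRing.unit -> tau (u ^+ n) = tau u ^+ n.
Proof.
move=> uU; elim: n => [|n IHn]; first by rewrite !expr0 tau1.
by rewrite !exprS tauM ?unitrX // IHn.
Qed.

Lemma tau_conj u : u \is a GRing.unit -> (tau u)^* = (tau u)^-1.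
Proof.
move=> uU; pose w : {unit R} := FinRing.Unit uU.
apply: (conj_unity_root (fingroup.order_gt0 w)).
have /(congr1 val) : (w ^+ fingroup.order w)%g = 1%g := fingroup.expg_order w.
by rewrite FinRing.val_unitX /= => w1; rewrite -tauX // w1 tau1.
Qed.

End MultCharacter.

Section Kloosterman.
Variable R : finComUnitRingType.
Variable M : {set R}.
Variables psi tau : R -> algC.
Hypothesis hloc : local_with_max M.
Hypothesis hnf : ~ is_field_ring R.
Hypothesis hodd : odd_residue_char M.
Hypothesis hpsi : additive_character psi.
Hypothesis hpsiP : primitive_additive psi.
Hypothesis htau : mult_character tau.
Hypothesis htauNP : ~ primitive_mult M tau.
Local Notation N := (annih M).
Implicit Types (c d m n t u v : R).

Let M_ideal : is_ideal M := max_ideal hloc.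
Let N_sub_M : N \subset M := annih_max_sub_max hloc hnf.

Lemma unit_one_add_annih n : n \in N -> 1 + n \is a GRing.unit.
Proof. by move=> nN; rewrite (unit_one_add_max hloc) ?(subsetP N_sub_M). Qed.

Lemma invr_one_add_annih n : n \in N -> (1 + n)^-1 = 1 - n.
Proof.
move=> nN; apply: (mulrI (unit_one_add_annih nN)); rewrite mulrV ?unit_one_add_annih //.
have -> : (1 + n) * (1 - n) = 1 - n * n by ring.
by rewrite (annihP nN (subsetP N_sub_M n nN)) subr0.
Qed.

(* The conductor of [tau] is a nonzero ideal, hence contains [N]. *)
Lemma tau_one_add_annih n : n \in N -> tau (1 + n) = 1.
Proof.
move=> nN; apply/eqP/negPn/negP => tau_n; apply: htauNP; split.
  by exists (1 + n); split=> //; exact: unit_one_add_annih.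
move=> I hI _ tauI; apply/eqP; apply: contraR tau_n => I0.
exact/eqP/tauI/(subsetP (annih_max_sub hloc hpsi hpsiP hI I0)).
Qed.

Variable a : R.
Hypothesis ha : a \is a GRing.unit.

Definition kloost_class d := \sum_(u | u - d \in M) tau u * psi (u + a * u^-1).

(* The difference of the additive arguments at [v (1 + t)] and at [v]. *)
Definition kloost_phase t v := t * (v - a * (v * (1 + t))^-1).

Lemma kloost_term_pair t v : v \is a GRing.unit -> t \in M ->
  (tau v * psi (v + a * v^-1))^* * (tau (v * (1 + t)) * psi (v * (1 + t) + a * (v * (1 + t))^-1))
  = tau (1 + t) * psi (kloost_phase t v).
Proof.
move=> vU tM; have tU := unit_one_add_max hloc tM.
have wU : v * (1 + t) \is a GRing.unit by rewrite unitrM vU tU.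
rewrite rmorphM /= tau_conj // psi_conj // tauM //.
rewrite mulrACA -!mulrA mulKf ?tau_neq0 // -psiD //; congr (_ * psi _).
set W := (v * (1 + t))^-1.
have WV : W - v^-1 = - (t * W).
  rewrite subr_invr // (_ : v - v * (1 + t) = - (v * t)); last by ring.
  by rewrite mulrN -mulrA [v^-1 * _]mulrA mulVr // mul1r mulrC.
apply/eqP; rewrite -subr_eq0 /kloost_phase -/W.
have -> : - (v + a * v^-1) + (v * (1 + t) + a * W) - t * (v - a * W)
  = a * ((W - v^-1) + t * W) by ring.
by rewrite WV addNr mulr0.
Qed.

Lemma kloost_phase_shift t v s : v \is a GRing.unit -> t \in M -> s \in M -> t * s \in N ->
  kloost_phase t (v + s) = kloost_phase t v + t * (1 + a * (1 + t)^-1 * v^-1 * v^-1) * s.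
Proof.
move=> vU tM sM tsN; have tU := unit_one_add_max hloc tM.
have vsU : v + s \is a GRing.unit by rewrite (unitrD_max hloc).
rewrite /kloost_phase !invrM //; set e := (1 + t)^-1; set X := (v + s)^-1; set Y := v^-1.
have XY : X - Y = - (X * Y * s).
  by rewrite subr_invr // (_ : v - (v + s) = - s) ?mulrN //; ring.
have tsX : t * s * X = t * s * Y.
  by apply: annih_mul_eq tsN _; rewrite XY idealN // idealMl.
apply/eqP; rewrite -subr_eq0.
have -> : t * (v + s - a * (e * X)) - (t * (v - a * (e * Y)) + t * (1 + a * e * Y * Y) * s)
  = a * e * (t * s * X * Y - t * s * Y * Y) - a * e * t * (X - Y + X * Y * s) by ring.
by rewrite tsX XY subrr addNr !mulr0 subrr.
Qed.

Lemma kloost_phase_annih d t v : a - d ^+ 2 \in M -> v - d \in M -> t \in N ->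
  kloost_phase t v = 0.
Proof.
move=> adM vdM tN; have tM := subsetP N_sub_M t tN.
have vU := unit_cong hloc (sqr_cong_unit hloc ha adM) vdM.
have wU : v * (1 + t) \is a GRing.unit by rewrite unitrM vU (unit_one_add_max hloc).
rewrite /kloost_phase (annihP tN) // -(mul_max_unitl hloc _ wU) mulrBr mulrCA mulrV // mulr1.
rewrite (_ : _ * v - a = (v * v - a) + v * v * t); last by ring.
by rewrite idealD ?idealMl ?(sqr_cong hloc adM vdM).
Qed.

(* [1 + a / ((1 + t) v^2)] is congruent to [2] when [v^2] is congruent to [a]. *)
Lemma kloost_weight_unit d t v : a - d ^+ 2 \in M -> v - d \in M -> t \in M ->
  1 + a * (1 + t)^-1 * v^-1 * v^-1 \is a GRing.unit.
Proof.
move=> adM vdM tM; have vU := unit_cong hloc (sqr_cong_unit hloc ha adM) vdM.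
have tU := unit_one_add_max hloc tM.
set w := (X in X \is a GRing.unit).
have w2M : w - 2 \in M.
  have -> : w - 2 = (1 + t)^-1 * v^-1 * v^-1 * (a - v * v * (1 + t)).
    transitivity (a * (1 + t)^-1 * v^-1 * v^-1 - ((1 + t)^-1 * (1 + t)) * (v^-1 * v) * (v^-1 * v)).
      by rewrite !mulVr // !mulr1 /w; ring.
    by ring.
  rewrite idealMl // (_ : a - v * v * (1 + t) = - (v * v - a) - v * v * t); last by ring.
  by rewrite idealB ?idealN ?idealMl ?(sqr_cong hloc adM vdM).
exact: (unit_cong hloc (notin_max_unit hloc (two_notin_max hloc hodd)) w2M).
Qed.

(* For [t] outside [N] the phase moves linearly along cosets of [{x | t x \in N}],
   with a slope that does not annihilate it. *)
Lemma sum_kloost_phase d t : a - d ^+ 2 \in M -> t \in M ->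
  \sum_(v | v - d \in M) psi (kloost_phase t v) = if t \in N then #|M|%:R else 0.
Proof.
move=> adM tM; have dU := sqr_cong_unit hloc ha adM.
have tU := unit_one_add_max hloc tM.
case: ifPn => [tN | tNN].
  rewrite sum_coset -sumr_const; apply: eq_bigr => s sM.
  by rewrite (kloost_phase_annih adM _ tN) ?(psi0 hpsi) // addrK.
pose I := [set x | t * x \in N].
have hI : is_ideal I := mulr_preim_ideal t (annih_ideal M).
have I_sub_M : I \subset M by apply: (proper_ideal_sub_max hloc hI); rewrite inE mulr1.
apply: (sum_psi_linear_shift hpsi hpsiP hI (c := fun v => t * (1 + a * (1 + t)^-1 * v^-1 * v^-1))).
- by move=> v s sI; rewrite addrAC idealDr // (subsetP I_sub_M).
- move=> v s vdM sI; apply: kloost_phase_shift (unit_cong hloc dU vdM) tM _ _.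
    exact: (subsetP I_sub_M).
  by rewrite inE in sI.
move=> v vdM /=; have wU := kloost_weight_unit adM vdM tM.
have t0 : t != 0 by apply: contraNneq tNN => ->; exact: ideal0 (annih_ideal M).
have [x txN tx0] := exists_mul_annih_max hloc hpsi hpsiP t0.
apply: contra tx0 => cA; have xI : x \in I by rewrite inE.
have := annihP cA xI; rewrite mulrAC => E.
by rewrite -(mulrK wU (t * x)) E mul0r.
Qed.

Lemma norm_kloost_class d : a - d ^+ 2 \in M -> `|kloost_class d| ^+ 2 = #|R|%:R.
Proof.
move=> adM; have dU := sqr_cong_unit hloc ha adM.
rewrite normCK mulrC /kloost_class rmorph_sum mulr_suml.
transitivity (\sum_(v | v - d \in M) \sum_(t in M) tau (1 + t) * psi (kloost_phase t v)).
  apply: eq_bigr => v vdM; have vU := unit_cong hloc dU vdM.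
  rewrite mulr_sumr (sum_class_mul hloc _ vU vdM); apply: eq_bigr => t tM.
  exact: kloost_term_pair.
rewrite exchange_big /= (eq_bigr (fun t => if t \in N then #|M|%:R else 0)) => [|t tM].
  rewrite -big_mkcondr /= (eq_bigl (mem N)) => [|t]; last first.
    by rewrite andb_idl // => /(subsetP N_sub_M).
  by rewrite sumr_const -mulrnA (card_ideal_annih hpsi hpsiP M_ideal).
rewrite -mulr_sumr sum_kloost_phase //.
by case: ifP => tN; rewrite ?mulr0 // tau_one_add_annih ?mul1r.
Qed.

Lemma kloost_twist m n : m \in N -> n \in N ->
  kloost psi tau (a * (1 + m)) = \sum_(u | u \is a GRing.unit)
    tau u * psi (u + a * (1 + m) * u^-1) * psi ((u - a * u^-1) * n).
Proof.
move=> mN nN; have nU := unit_one_add_annih nN.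
rewrite /kloost (reindex_inj (mulIr nU)) /=; apply: eq_big => [u | u]; rewrite unitrMl // => uU.
rewrite tauM // tau_one_add_annih // mulr1 -[RHS]mulrA -psiD //; congr (_ * psi _).
rewrite invrM // invr_one_add_annih //.
have -> : u * (1 + n) + a * (1 + m) * ((1 - n) * u^-1) =
   u + a * (1 + m) * u^-1 + (u - a * u^-1) * n - a * u^-1 * (m * n) by ring.
by rewrite (annihP mN (subsetP N_sub_M n nN)) mulr0 subr0.
Qed.

(* Averaging [kloost_twist] over [n \in N] kills the units with [u^2] not congruent to [a]. *)
Lemma kloost_sqrt_support m : m \in N ->
  kloost psi tau (a * (1 + m)) = \sum_(u | (u \is a GRing.unit) && (u * u - a \in M))
    tau u * psi (u + a * (1 + m) * u^-1).
Proof.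
move=> mN; have N_neq0 : #|N|%:R != 0 :> algC.
  by rewrite pnatr_eq0 -lt0n (card_ideal_gt0 (annih_ideal M)).
apply: (mulfI N_neq0).
rewrite [LHS]mulr_natl -sumr_const (eq_bigr _ (fun n nN => kloost_twist mN nN)).
rewrite exchange_big /= big_mkcondr mulr_sumr; apply: eq_bigr => u uU.
rewrite -mulr_sumr (sum_psi_annih_max hloc hpsi hpsiP).
rewrite -(mul_max_unitl hloc _ uU) mulrBr mulrCA mulrV // mulr1.
by case: ifP => _; rewrite ?mulr0 // mulrC.
Qed.

Lemma kloost_nonsquare m : m \in N -> ~~ [exists x, a - x ^+ 2 \in M] ->
  kloost psi tau (a * (1 + m)) = 0.
Proof.
move=> mN /existsPn nonsq; rewrite kloost_sqrt_support // big1 // => u /andP[_ uuaM].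
by move: (nonsq u); rewrite expr2 (idealBC M_ideal uuaM).
Qed.

Lemma sqrt_class_opp c u : a - c ^+ 2 \in M ->
  [&& u \is a GRing.unit, u * u - a \in M & u - c \notin M] = (u - - c \in M).
Proof.
move=> acM; have cU := sqr_cong_unit hloc ha acM.
apply/and3P/idP => [[uU uuaM ucNM] | uncM].
  have : (u - c) * (u - - c) \in M.
    have -> : (u - c) * (u - - c) = (u * u - a) + (a - c ^+ 2) by ring.
    exact: idealD.
  by rewrite (mul_max hloc) (negbTE ucNM).
split; first by rewrite (unit_cong hloc _ uncM) ?unitrN.
  by apply: (sqr_cong hloc _ uncM); rewrite sqrrN.
apply: contra (two_notin_max hloc hodd) => ucM.
have : (u - - c) - (u - c) \in M by rewrite idealB.
rewrite (_ : _ - _ = 2 * c); last by ring.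
by rewrite (mul_max hloc) (negbTE (unit_notin_max hloc cU)) orbF.
Qed.

Lemma kloost_arg_twist d u m : d \is a GRing.unit -> u - d \in M -> m \in N ->
  u + a * (1 + m) * u^-1 = (u + a * u^-1) + a * d^-1 * m.
Proof.
move=> dU udM mN; rewrite (_ : u + _ = u + a * u^-1 + a * (m * u^-1)); last by ring.
by rewrite (annih_mul_eq mN (invr_cong hloc dU udM)); ring.
Qed.

Lemma kloost_square m c : m \in N -> a - c ^+ 2 \in M ->
  kloost psi tau (a * (1 + m))
  = psi (a * c^-1 * m) * kloost_class c + psi (- (a * c^-1) * m) * kloost_class (- c).
Proof.
move=> mN acM; have cU := sqr_cong_unit hloc ha acM.
have ncU : - c \is a GRing.unit by rewrite unitrN.
rewrite kloost_sqrt_support // (bigID (fun u => u - c \in M)) /= /kloost_class !mulr_sumr.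
congr (_ + _); apply: eq_big => [u | u].
- apply/andP/idP => [[_ //] | ucM].
  by split=> //; rewrite (unit_cong hloc cU ucM) (sqr_cong hloc acM ucM).
- move=> /andP[_ ucM].
  by rewrite (kloost_arg_twist cU ucM mN) psiD // mulrA mulrC.
- by rewrite -andbA sqrt_class_opp.
rewrite -andbA sqrt_class_opp // => uncM.
by rewrite (kloost_arg_twist ncU uncM mN) psiD // invrN mulrN mulrA mulrC.
Qed.

End Kloosterman.

Theorem mainTheorem9 (R : finComUnitRingType) (M : {set R})
  (psi tau : R -> algC)
  (hloc : local_with_max M)
  (hnf : ~ is_field_ring R)
  (hodd : odd_residue_char M)
  (hpsi : additive_character psi) (hpsiP : primitive_additive psi)
  (htau : mult_character tau) (htauNP : ~ primitive_mult M tau)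
  (a : R) (ha : a \is a GRing.unit) :
  (#|annih M|%:R)^-1 *
    \sum_(b in [set 1 + m | m in annih M]) `|kloost psi tau (a * b)| ^+ 2
  = #|R|%:R * (1 + sigma M a).
Proof.
have N_neq0 : #|annih M|%:R != 0 :> algC.
  by rewrite pnatr_eq0 -lt0n (card_ideal_gt0 (annih_ideal M)).
rewrite big_imset /=; last by move=> x y _ _; apply: addrI.
rewrite /sigma; case: ifPn => [/existsP[c acM] | nonsq].
  have acU : a * c^-1 \is a GRing.unit by rewrite unitrM ha unitrV (sqr_cong_unit hloc ha acM).
  rewrite (eq_bigr _ (fun m mN => congr1 (fun z => `|z| ^+ 2)
    (kloost_square hloc hnf hodd hpsi hpsiP htau htauNP ha mN acM))) /=.
  rewrite (sum_norm_twisted hloc hpsi hpsiP _ _ hodd acU).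
  rewrite !(norm_kloost_class hloc hnf hodd hpsi hpsiP htau htauNP ha) ?sqrrN //.
  by rewrite mulKf //; ring.
rewrite big1 => [|m mN]; last first.
  by rewrite (kloost_nonsquare hloc hnf hpsi hpsiP htau htauNP mN nonsq) normr0 expr0n.
by rewrite mulr0 subrr mulr0.
Qed.
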